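(* Let $(V,d)$ be a finite metric space with root $r\in V$ and let $\pi$ be any master tour on $(V,d)$. Let $\{q_v\}_{v\in V}$ and $\{\bar p_v\}_{v\in V}$ be probabilities in $[0,1]$ and let $\beta\le 1$ be a constant such that $\beta\bar p_v\le q_v\le\bar p_v$ for each $v\in V$. Then the expected latency of $\pi$ under probabilities $\{q_v\}_{v\in V}$ is at least $\beta^3$ times the expected latency of $\pi$ under probabilities $\{\bar p_v\}_{v\in V}$.
   Context: A master tour $\pi$ is a tour starting at the root $r$ visiting all vertices of $V$. For an active set $A\subseteq V$, $\pi_A$ visits the vertices of $A$ starting from $r$ in the order of $\pi$ (shortcutting inactive vertices); the latency of $v\in A$ is the length of the path from $r$ to $v$ along $\pi_A$. The expected latency of $\pi$ under probabilities $\{x_v\}$ is $\mathbb{E}_A[\sum_{v\in A}(\text{latency of }v\text{ in }\pi_A)]$ where $A$ contains each $v$ independently with probability $x_v$. *)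

From mathcomp Require Import all_boot all_order all_algebra.
Set Implicit Arguments. Unset Strict Implicit. Unset Printing Implicit Defensive.
Import Order.TTheory GRing.Theory Num.Theory.
Local Open Scope ring_scope.

Section Latency.
Variables (R : realFieldType) (V : finType).

Definition is_metric (d : V -> V -> R) : Prop :=
  [/\ forall x y, d x y = 0 <-> x = y,
      forall x y, d x y = d y x &
      forall x y z, d x z <= d x y + d y z].

Fixpoint path_len (d : V -> V -> R) (x : V) (s : seq V) : R :=
  if s is y :: s' then d x y + path_len d y s' else 0.

Definition master_tour (r : V) (pi : seq V) : Prop :=
  [/\ uniq pi, forall v : V, v \in pi & head r pi = r].

Definition sub_tour (pi : seq V) (A : {set V}) : seq V :=
  [seq v <- pi | v \in A].

Definition latency (d : V -> V -> R) (r : V) (pi : seq V) (A : {set V}) (v : V) : R :=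
  let s := sub_tour pi A in path_len d r (take (index v s).+1 s).

(* probability of active set A when each v is active independently w.p. x v *)
Definition set_prob (x : V -> R) (A : {set V}) : R :=
  \prod_(v in A) x v * \prod_(v in ~: A) (1 - x v).

Definition exp_latency (d : V -> V -> R) (r : V) (pi : seq V) (x : V -> R) : R :=
  \sum_(A : {set V}) set_prob x A * \sum_(v in A) latency d r pi A v.

End Latency.

From mathcomp Require Import all_boot all_order all_algebra.
From mathcomp Require Import ring lra.
Set Implicit Arguments. Unset Strict Implicit. Unset Printing Implicit Defensive.
Import Order.TTheory GRing.Theory Num.Theory.
Local Open Scope ring_scope.

(* Summing the latencies along a path x -> t_1 -> ... -> t_n charges the edge
   (t_(i-1), t_i) once for each of t_i, ..., t_n.  Split the expected total charge
   into that of the first edge and that of the later edges, and compute both by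
   conditioning on whether the next vertex w of the master tour is active.  If it
   is, the first edge is (x, w) with expected charge d(x, w) (1 + sum of the
   probabilities after w); passing from pbar to q loses at most a factor beta on
   the probability of w and one on the count, so beta^2 overall.  A later edge out
   of w also needs w to be active: one more factor beta.  The inactive case only
   helps, as 1 - q_v >= 1 - pbar_v. *)

Section Expectation.
Variables (R : realFieldType) (V : finType).
Implicit Types (p : V -> R) (A : {set V}) (f g : {set V} -> R).

Definition expect p f : R := \sum_A set_prob p A * f A.

Lemma set_probE p A :
  set_prob p A = \prod_v (if v \in A then p v else 1 - p v).
Proof.
rewrite /set_prob (bigID (mem A) predT) /=; congr (_ * _).
- by apply: eq_bigr => v /= ->.
- rewrite [RHS](eq_bigr (fun v => 1 - p v)) => [|v /negbTE -> //].
  by apply: eq_bigl => v; rewrite inE.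
Qed.

Lemma sum_set_prob p : \sum_A set_prob p A = 1.
Proof.
transitivity (\prod_v \sum_(b : bool) (if b then p v else 1 - p v)); last first.
  by rewrite big1 // => v _; rewrite big_bool /= addrC subrK.
rewrite bigA_distr_bigA /= (reindex (fun F : {ffun V -> bool} => [set v | F v])).
  by apply: eq_bigr => F _; rewrite set_probE; apply: eq_bigr => v _; rewrite inE.
exists (fun A => [ffun v => v \in A]) => [F _ | A _].
  by apply/ffunP => v; rewrite ffunE inE.
by apply/setP => v; rewrite inE ffunE.
Qed.

Lemma eq_expect p f g : f =1 g -> expect p f = expect p g.
Proof. by move=> fg; apply: eq_bigr => A _; rewrite fg. Qed.

Lemma expect_cst p c : expect p (fun _ => c) = c.
Proof. by rewrite /expect -mulr_suml sum_set_prob mul1r. Qed.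

Lemma expectD p f g : expect p (fun A => f A + g A) = expect p f + expect p g.
Proof. by rewrite /expect -big_split; apply: eq_bigr => A _; rewrite mulrDr. Qed.

Lemma expectZ p c f : expect p (fun A => c * f A) = c * expect p f.
Proof. by rewrite /expect mulr_sumr; apply: eq_bigr => A _; rewrite mulrCA. Qed.

Lemma sum_sets_setU1 (w : V) (F : {set V} -> R) :
  \sum_A F A = \sum_(A : {set V} | w \notin A) (F (w |: A) + F A).
Proof.
rewrite big_split /= (bigID (fun A => w \in A)) /=; congr (_ + _).
rewrite (reindex_onto (fun A => w |: A) (fun A => A :\ w)) => [|A wA]; last first.
  by rewrite setD1K.
apply: eq_bigl => A; rewrite setU11 /=.
have [wA | wNA] := boolP (w \in A); last by rewrite setU1K ?eqxx.
by apply/negbTE; apply: contraTneq wA => <-; rewrite setD11.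
Qed.

Lemma expect_cond p w f g :
  (forall A, f (A :\ w) = f A) -> (forall A, g (A :\ w) = g A) ->
  expect p (fun A => if w \in A then f A else g A)
  = p w * expect p f + (1 - p w) * expect p g.
Proof.
move=> fD1 gD1.
pose rest A := \prod_(v | v != w) (if v \in A then p v else 1 - p v).
have set_prob_rest A :
    set_prob p A = (if w \in A then p w else 1 - p w) * rest A.
  by rewrite set_probE (bigD1 w).
have restU1 A : rest (w |: A) = rest A.
  by apply: eq_bigr => v vNw; rewrite !inE (negbTE vNw).
have fU1 A : w \notin A -> f (w |: A) = f A by move=> wNA; rewrite -fD1 setU1K.
have gU1 A : w \notin A -> g (w |: A) = g A by move=> wNA; rewrite -gD1 setU1K.
rewrite /expect (sum_sets_setU1 w) (sum_sets_setU1 w (fun A => _ * f A)).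
rewrite (sum_sets_setU1 w (fun A => _ * g A)) !mulr_sumr -big_split /=.
apply: eq_bigr => A wNA.
by rewrite !set_prob_rest restU1 fU1 // gU1 // setU11 (negbTE wNA); ring.
Qed.

End Expectation.

Section TourCosts.
Variables (R : realFieldType) (V : finType) (d : V -> V -> R).
Implicit Types (x w : V) (s t : seq V) (A : {set V}) (p : V -> R).

Definition first_cost x t : R :=
  if t is w :: _ then d x w * (size t)%:R else 0.

Fixpoint rest_cost t : R :=
  if t is w :: t' then first_cost w t' + rest_cost t' else 0.

Lemma sum_prefix_path_len x t : uniq t ->
  \sum_(v <- t) path_len d x (take (index v t).+1 t)
  = first_cost x t + rest_cost t.
Proof.
elim: t x => [|w t IH] x /=; first by rewrite big_nil addr0.
case/andP=> wNt t_uniq; rewrite big_cons eqxx take0 /= addr0.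
rewrite (eq_big_seq (fun v => d x w + path_len d w (take (index v t).+1 t))).
  rewrite big_split /= IH // big_const_seq count_predT iter_addr_0 -mulr_natr mulrS.
  by ring.
by move=> v vt; rewrite /= ifN //; apply: contraNneq wNt => ->.
Qed.

Lemma sub_tour_setD1 s w A : w \notin s -> sub_tour s (A :\ w) = sub_tour s A.
Proof.
by move=> wNs; apply: eq_in_filter => v vs; rewrite !inE; case: eqP vs wNs => // ->->.
Qed.

Lemma expect_sub_tour_cons p w s (F : seq V -> R) : w \notin s ->
  expect p (fun A => F (sub_tour (w :: s) A))
  = p w * expect p (fun A => F (w :: sub_tour s A))
    + (1 - p w) * expect p (fun A => F (sub_tour s A)).
Proof.
move=> wNs; rewrite -expect_cond => [|A|A]; rewrite ?sub_tour_setD1 //.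
by apply: eq_expect => A; rewrite /sub_tour /=; case: ifP.
Qed.

Lemma expect_size_sub_tour p s : uniq s ->
  expect p (fun A => (size (sub_tour s A))%:R) = \sum_(v <- s) p v.
Proof.
elim: s => [|w s IH]; first by rewrite /sub_tour /= expect_cst big_nil.
case/andP=> wNs s_uniq.
rewrite (expect_sub_tour_cons _ (fun t => (size t)%:R)) //= big_cons -IH //.
under eq_expect => A do rewrite mulrS.
by rewrite expectD expect_cst; ring.
Qed.

Fixpoint exp_first_cost p x s : R :=
  if s is w :: s' then
    p w * (d x w * (1 + \sum_(v <- s') p v)) + (1 - p w) * exp_first_cost p x s'
  else 0.

Fixpoint exp_rest_cost p s : R :=
  if s is w :: s' then p w * exp_first_cost p w s' + exp_rest_cost p s' else 0.

Lemma expect_first_cost p x s : uniq s ->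
  expect p (fun A => first_cost x (sub_tour s A)) = exp_first_cost p x s.
Proof.
elim: s => [|w s IH]; first by rewrite expect_cst.
case/andP=> wNs s_uniq; rewrite expect_sub_tour_cons //= IH //.
under eq_expect => A do rewrite mulrS.
by rewrite expectZ expectD expect_cst expect_size_sub_tour.
Qed.

Lemma expect_rest_cost p s : uniq s ->
  expect p (fun A => rest_cost (sub_tour s A)) = exp_rest_cost p s.
Proof.
elim: s => [|w s IH]; first by rewrite expect_cst.
case/andP=> wNs s_uniq; rewrite expect_sub_tour_cons //= expectD.
by rewrite expect_first_cost // IH //; ring.
Qed.

Lemma exp_latencyE r pi p : uniq pi -> (forall v, v \in pi) ->
  exp_latency d r pi p = exp_first_cost p r pi + exp_rest_cost p pi.
Proof.
move=> pi_uniq pi_total.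
rewrite -expect_first_cost // -expect_rest_cost // -expectD.
apply: eq_expect => A; rewrite -sum_prefix_path_len ?filter_uniq //.
rewrite /sub_tour big_filter (perm_big pi) //.
by apply: uniq_perm; rewrite ?index_enum_uniq // => v; rewrite mem_index_enum pi_total.
Qed.

End TourCosts.

Section Nonnegativity.
Variables (R : realFieldType) (V : finType) (d : V -> V -> R) (p : V -> R).
Hypothesis d_ge0 : forall x y, 0 <= d x y.
Hypothesis p01 : forall v, 0 <= p v <= 1.

Lemma exp_first_cost_ge0 x s : 0 <= exp_first_cost d p x s.
Proof.
elim: s x => //= w s IH x; have /andP[pw_ge0 pw_le1] := p01 w.
apply: addr_ge0; apply: mulr_ge0; rewrite ?subr_ge0 //.
apply: mulr_ge0; rewrite // addr_ge0 // sumr_ge0 // => v _.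
by have /andP[] := p01 v.
Qed.

Lemma exp_rest_cost_ge0 s : 0 <= exp_rest_cost d p s.
Proof.
elim: s => //= w s IH; rewrite addr_ge0 // mulr_ge0 ?exp_first_cost_ge0 //.
by have /andP[] := p01 w.
Qed.

End Nonnegativity.

Section Scaling.
Variables (R : realFieldType) (V : finType) (d : V -> V -> R) (p q : V -> R) (b : R).
Hypothesis d_ge0 : forall x y, 0 <= d x y.
Hypothesis p01 : forall v, 0 <= p v <= 1.
Hypotheses (b_ge0 : 0 <= b) (b_le1 : b <= 1).
Hypothesis bpq : forall v, b * p v <= q v <= p v.

Lemma one_add_sum_scale s : b * (1 + \sum_(v <- s) p v) <= 1 + \sum_(v <- s) q v.
Proof.
rewrite mulrDr mulr1 mulr_sumr lerD // ler_sum // => v _.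
by have /andP[] := bpq v.
Qed.

Lemma exp_first_cost_scale x s :
  b ^+ 2 * exp_first_cost d p x s <= exp_first_cost d q x s.
Proof.
elim: s x => [|w s IH] x /=; first by rewrite mulr0.
have /andP[pw_ge0 pw_le1] := p01 w; have /andP[bpw_le_qw qw_le_pw] := bpq w.
rewrite mulrDr; apply: lerD.
- rewrite [X in X <= _](_ : _ = b * p w * (d x w * (b * (1 + \sum_(v <- s) p v))));
    last by ring.
  rewrite ler_pM ?mulr_ge0 ?ler_wpM2l ?one_add_sum_scale //.
  by rewrite addr_ge0 // sumr_ge0 // => v _; have /andP[] := p01 v.
- rewrite mulrCA ler_pM ?lerB ?subr_ge0 ?mulr_ge0 ?exprn_ge0 //.
  exact: exp_first_cost_ge0.
Qed.

Lemma exp_rest_cost_scale s : b ^+ 3 * exp_rest_cost d p s <= exp_rest_cost d q s.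
Proof.
elim: s => [|w s IH] /=; first by rewrite mulr0.
have /andP[pw_ge0 _] := p01 w; have /andP[bpw_le_qw _] := bpq w.
rewrite mulrDr lerD // exprS mulrACA ler_pM ?mulr_ge0 ?exprn_ge0
  ?exp_first_cost_scale ?exp_first_cost_ge0 //.
Qed.

End Scaling.

Lemma metric_ge0 (R : realFieldType) (V : finType) (d : V -> V -> R) :
  is_metric d -> forall x y, 0 <= d x y.
Proof.
case=> d_eq0 d_sym d_tri x y; have := d_tri x y x.
by rewrite (proj2 (d_eq0 x x) erefl) [d y x]d_sym; lra.
Qed.

Theorem lemma3 (R : realFieldType) (V : finType) (d : V -> V -> R) (r : V)
    (pi : seq V) (q pbar : V -> R) (beta : R) :
  is_metric d -> master_tour r pi ->
  (forall v, 0 <= q v <= 1) -> (forall v, 0 <= pbar v <= 1) ->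
  beta <= 1 ->
  (forall v, beta * pbar v <= q v <= pbar v) ->
  exp_latency d r pi q >= beta ^+ 3 * exp_latency d r pi pbar.
Proof.
move=> /metric_ge0 d_ge0 [pi_uniq pi_total _] q01 p01 b_le1 bpq.
rewrite !exp_latencyE //.
have [b_ge0 | b_lt0] := leP 0 beta.
  rewrite mulrDr lerD ?exp_rest_cost_scale //.
  apply: le_trans (exp_first_cost_scale d_ge0 p01 b_ge0 b_le1 bpq r pi).
  rewrite ler_wpM2r ?exp_first_cost_ge0 // exprS ler_piMl ?exprn_ge0 //.
apply: le_trans (addr_ge0 (exp_first_cost_ge0 d_ge0 q01 r pi)
  (exp_rest_cost_ge0 d_ge0 q01 pi)).
rewrite mulr_le0_ge0 ?addr_ge0 ?exp_first_cost_ge0 ?exp_rest_cost_ge0 //.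
by rewrite exprn_odd_le0 ?ltW.
Qed.
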